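(* Let $(\mathfrak{A},\mathfrak{A}_0)$ be a $*$-semisimple Banach quasi $*$-algebra such that $\mathfrak{A}[\tau_w]$ is sequentially complete. Let $\delta$ be a closable qu*-derivation of $(\mathfrak{A},\mathfrak{A}_0)$ with closure $\overline{\delta}$. If $a,b\in\mathcal{D}(\overline{\delta})$ and $a\,\square\, b$ is well defined, then there exists an element $\overline{\delta}_w(a\,\square\, b)\in\mathfrak{A}$ such that $$\varphi(\overline{\delta}_w(a\,\square\, b)u,v)=\varphi(bu,\overline{\delta}(a)^*v)+\varphi(\overline{\delta}(b)u,a^*v)$$ for all $u,v\in\mathfrak{A}_0$ and all $\varphi\in\mathcal{S}_{\mathfrak{A}_0}(\mathfrak{A})$.
   Context: A quasi $*$-algebra $(\mathfrak{A},\mathfrak{A}_0)$ consists of a vector space $\mathfrak{A}$ and a $*$-algebra $\mathfrak{A}_0\subseteq\mathfrak{A}$ such that $\mathfrak{A}$ carries an involution extending that of $\mathfrak{A}_0$, $\mathfrak{A}$ is an $\mathfrak{A}_0$-bimodule whose module multiplications extend the multiplication of $\mathfrak{A}_0$ with $(xa)y=x(ay)$, $a(xy)=(ax)y$ for $a\in\mathfrak{A}$, $x,y\in\mathfrak{A}_0$, and $(ax)^*=x^*a^*$. It is a Banach quasi $*$-algebra if $\mathfrak{A}$ is a Banach space with norm $\|\cdot\|$ such that $\|a^*\|=\|a\|$, $\mathfrak{A}_0$ is dense in $\mathfrak{A}$, and for each $x\in\mathfrak{A}_0$ the map $a\mapsto ax$ is continuous on $\mathfrak{A}$. Let $\mathcal{S}_{\mathfrak{A}_0}(\mathfrak{A})$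 be the set of sesquilinear forms $\varphi$ on $\mathfrak{A}\times\mathfrak{A}$ with $\varphi(a,a)\ge 0$, $\varphi(ax,y)=\varphi(x,a^*y)$ for $a\in\mathfrak{A}$, $x,y\in\mathfrak{A}_0$, and $|\varphi(a,b)|\le\|a\|\|b\|$ for all $a,b\in\mathfrak{A}$. The Banach quasi $*$-algebra is $*$-semisimple if $\varphi(a,a)=0$ for all $\varphi\in\mathcal{S}_{\mathfrak{A}_0}(\mathfrak{A})$ implies $a=0$. The topology $\tau_w$ on $\mathfrak{A}$ is generated by the seminorms $a\mapsto|\varphi(ax,y)|$, $\varphi\in\mathcal{S}_{\mathfrak{A}_0}(\mathfrak{A})$, $x,y\in\mathfrak{A}_0$. For $a,b\in\mathfrak{A}$ the weak product $a\,\square\, b$ is well defined if there is a (necessarily unique) $c\in\mathfrak{A}$ with $\varphi(bx,a^*y)=\varphi(cx,y)$ for all $x,y\in\mathfrak{A}_0$, $\varphi\in\mathcal{S}_{\mathfrak{A}_0}(\mathfrak{A})$; then $a\,\square\, b:=c$. A qu*-derivation is a linear map $\delta:\mathfrak{A}_0\to\mathfrak{A}$ with $\delta(x^* )=\delta(x)^*$ and $\delta(xy)=\delta(x)y+x\delta(y)$ for $x,y\in\mathfrak{A}_0$. It is closable if it is closable as a linear map from $\mathfrak{A}_0\subseteq\mathfrak{A}$ (norm of $\mathfrak{A}$) into $\mathfrak{A}$; its closure $\overline{\delta}$ has domain $\mathcal{D}(\overline{\delta})$ consisting of those $a\in\mathfrak{A}$ for which there exist $\{x_n\}\subset\mathfrak{A}_0$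 and $w\in\mathfrak{A}$ with $\|x_n-a\|\to0$ and $\|\delta(x_n)-w\|\to 0$, and $\overline{\delta}(a):=w$. *)

From mathcomp Require Import all_boot all_order all_algebra.
From mathcomp Require Import all_classical all_reals all_analysis.
From mathcomp Require Import complex.
Import Order.TTheory GRing.Theory Num.Theory numFieldNormedType.Exports.
Set Implicit Arguments. Unset Strict Implicit. Unset Printing Implicit Defensive.
Local Open Scope ring_scope.
Local Open Scope classical_set_scope.

(* A is a complex Banach space; A0 is a subset of A (the *-algebra);
   bq_lmul x a = x a  (meaningful for x in A0),
   bq_rmul a x = a x  (meaningful for x in A0),
   bq_star = the involution of A (extending the one of A0).
   The product of A0 is the restriction of the module multiplications. *)
Record BQalg (R : realType) := BQAlg {
  bqA :> completeNormedModType R[i];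
  bqA0 : set bqA;
  bq_star : bqA -> bqA;
  bq_lmul : bqA -> bqA -> bqA;
  bq_rmul : bqA -> bqA -> bqA;
  bqA0_0 : bqA0 0;
  bqA0_D : forall x y, bqA0 x -> bqA0 y -> bqA0 (x + y);
  bqA0_Z : forall (c : R[i]) x, bqA0 x -> bqA0 (c *: x);
  bqA0_M : forall x y, bqA0 x -> bqA0 y -> bqA0 (bq_lmul x y);
  bq_lmul_rmul : forall x y, bqA0 x -> bqA0 y -> bq_lmul x y = bq_rmul x y;
  bq_lmul_linr : forall (c : R[i]) x a b, bqA0 x ->
      bq_lmul x (c *: a + b) = c *: bq_lmul x a + bq_lmul x b;
  bq_lmul_linl : forall (c : R[i]) x y a, bqA0 x -> bqA0 y ->
      bq_lmul (c *: x + y) a = c *: bq_lmul x a + bq_lmul y a;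
  bq_rmul_linl : forall (c : R[i]) a b x, bqA0 x ->
      bq_rmul (c *: a + b) x = c *: bq_rmul a x + bq_rmul b x;
  bq_rmul_linr : forall (c : R[i]) a x y, bqA0 x -> bqA0 y ->
      bq_rmul a (c *: x + y) = c *: bq_rmul a x + bq_rmul a y;
  bq_assoc_ll : forall x y a, bqA0 x -> bqA0 y ->
      bq_lmul x (bq_lmul y a) = bq_lmul (bq_lmul x y) a;
  bq_assoc_rr : forall a x y, bqA0 x -> bqA0 y ->
      bq_rmul (bq_rmul a x) y = bq_rmul a (bq_lmul x y);
  bq_assoc_lr : forall x a y, bqA0 x -> bqA0 y ->
      bq_rmul (bq_lmul x a) y = bq_lmul x (bq_rmul a y);
  bq_starK : forall a, bq_star (bq_star a) = a;
  bq_star_antilin : forall (c : R[i]) a b,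
      bq_star (c *: a + b) = c^* *: bq_star a + bq_star b;
  bqA0_star : forall x, bqA0 x -> bqA0 (bq_star x);
  bq_star_rmul : forall a x, bqA0 x ->
      bq_star (bq_rmul a x) = bq_lmul (bq_star x) (bq_star a);
  bq_norm_star : forall a, `|bq_star a| = `|a|;
  bqA0_dense : closure bqA0 = setT;
  bq_rmul_cont : forall x, bqA0 x -> continuous (fun a => bq_rmul a x)
}.

Section Defs.
Context {R : realType} (X : BQalg R).
Local Notation A0 := (@bqA0 R X).
Local Notation rmul := (@bq_rmul R X).
Local Notation lmul := (@bq_lmul R X).
Local Notation star := (@bq_star R X).

Definition sesquilinear (phi : X -> X -> R[i]) :=
  (forall (c : R[i]) a b d, phi (c *: a + b) d = c * phi a d + phi b d) /\
  (forall (c : R[i]) a b d, phi a (c *: b + d) = c^* * phi a b + phi a d).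

Definition S_A0 (phi : X -> X -> R[i]) :=
  [/\ sesquilinear phi,
      (forall a, 0 <= phi a a),
      (forall a x y, A0 x -> A0 y -> phi (rmul a x) y = phi x (rmul (star a) y))
    & (forall a b, `|phi a b| <= `|a| * `|b|)].

Definition star_semisimple :=
  forall a : X, (forall phi, S_A0 phi -> phi a a = 0) -> a = 0.

(* tau_w: locally convex topology of the seminorms a |-> |phi(a x, y)| *)
Definition tauw_cauchy (u : nat -> X) :=
  forall phi x y, S_A0 phi -> A0 x -> A0 y ->
  forall e : R[i], 0 < e -> exists N : nat, forall m n : nat,
    (N <= m)%N -> (N <= n)%N -> `|phi (rmul (u n - u m) x) y| < e.

Definition tauw_cvg (u : nat -> X) (a : X) :=
  forall phi x y, S_A0 phi -> A0 x -> A0 y ->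
  forall e : R[i], 0 < e -> exists N : nat, forall n : nat,
    (N <= n)%N -> `|phi (rmul (u n - a) x) y| < e.

Definition tauw_seq_complete :=
  forall u : nat -> X, tauw_cauchy u -> exists a, tauw_cvg u a.

(* qu*-derivation delta : A0 -> A (given as a map on X; only its values on A0 matter) *)
Definition qu_derivation (delta : X -> X) :=
  [/\ (forall (c : R[i]) x y, A0 x -> A0 y ->
         delta (c *: x + y) = c *: delta x + delta y),
      (forall x, A0 x -> delta (star x) = star (delta x))
    & (forall x y, A0 x -> A0 y ->
         delta (lmul x y) = rmul (delta x) y + lmul x (delta y))].

Definition closable (delta : X -> X) :=
  forall (u : nat -> X) (w : X), (forall n, A0 (u n)) ->
    u n @[n --> \oo] --> (0 : X) -> delta (u n) @[n --> \oo] --> w -> w = 0.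

(* graph of the closure: a \in D(closure delta) and (closure delta) a = w *)
Definition closure_graph (delta : X -> X) (a w : X) :=
  exists u : nat -> X, (forall n, A0 (u n)) /\
    u n @[n --> \oo] --> a /\ delta (u n) @[n --> \oo] --> w.

Definition is_weak_prod (a b c : X) :=
  forall phi x y, S_A0 phi -> A0 x -> A0 y ->
    phi (rmul b x) (rmul (star a) y) = phi (rmul c x) y.

Definition weak_prod_defined (a b : X) := exists c, is_weak_prod a b c.

End Defs.

Arguments sesquilinear {R} X phi.
Arguments S_A0 {R} X phi.
Arguments star_semisimple {R} X.
Arguments tauw_cauchy {R} X u.
Arguments tauw_cvg {R} X u a.
Arguments tauw_seq_complete {R} X.
Arguments qu_derivation {R} X delta.
Arguments closable {R} X delta.
Arguments closure_graph {R} X delta a w.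
Arguments is_weak_prod {R} X a b c.
Arguments weak_prod_defined {R} X a b.

From mathcomp Require Import all_boot all_order all_algebra.
From mathcomp Require Import all_classical all_reals all_analysis.
From mathcomp Require Import complex.
Import Order.TTheory GRing.Theory Num.Theory numFieldNormedType.Exports.
Set Implicit Arguments. Unset Strict Implicit. Unset Printing Implicit Defensive.
Local Open Scope ring_scope.
Local Open Scope classical_set_scope.

(* Pick x_n -> a and y_n -> b in A0 with delta x_n -> delta_bar a and
   delta y_n -> delta_bar b.  The Leibniz rule and the S_A0 identities give
     phi (delta (x_n y_n) u, v)
       = phi (y_n u, (delta x_n)^* v) + phi ((delta y_n) u, x_n^* v),
   and the right-hand side converges because the forms phi are bounded,
   hence jointly continuous.  So delta (x_n y_n) is tau_w-Cauchy and its
   tau_w-limit is the required element. *)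

Lemma continuous_eq0_on_dense {T : topologicalType} {K : numFieldType} (D : set T)
    (f : T -> K^o) :
  closure D = setT -> continuous f -> (forall x, D x -> f x = 0) -> forall x, f x = 0.
Proof.
move=> Ddense fcont fD0 x.
have closed0 : closed (f @^-1` [set 0]).
  move/continuous_closedP : fcont; apply; apply: accessible_closed_set1.
  exact/hausdorff_accessible/norm_hausdorff.
have : closure D `<=` f @^-1` [set 0].
  by rewrite [X in _ `<=` X](closure_id _).1 //; apply: closureS.
by apply; rewrite Ddense.
Qed.

Lemma norm_le_cvg0 {K : numFieldType} {T} {F : set_system T} {FF : Filter F}
    (V : normedModType K) (f : T -> V) (g : T -> K^o) :
  (forall t, `|f t| <= g t) -> g @ F --> (0 : K^o) -> f @ F --> (0 : V).
Proof.
move=> fg /cvgr0Pnorm_lt g0; apply/cvgr0Pnorm_lt => e e0.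
near=> t; apply: le_lt_trans (fg t) _.
rewrite -(ger0_norm (le_trans (normr_ge0 _) (fg t))).
by near: t; exact: g0.
Unshelve. all: by end_near. Qed.

Section BanachQuasiStarAlgebra.
Context {R : realType} (X : BQalg R).
Local Notation A0 := (@bqA0 R X).
Local Notation rmul := (@bq_rmul R X).
Local Notation lmul := (@bq_lmul R X).
Local Notation star := (@bq_star R X).

Lemma bq_starB a b : star (a - b) = star a - star b.
Proof.
have := bq_star_antilin (-1) b a.
by rewrite conjCN1 !scaleN1r [- b + a]addrC => ->; rewrite addrC.
Qed.

Lemma bq_rmulD a b x : A0 x -> rmul (a + b) x = rmul a x + rmul b x.
Proof. by move=> x0; have := bq_rmul_linl 1 a b x0; rewrite !scale1r. Qed.

Lemma bq_rmulB a b x : A0 x -> rmul (a - b) x = rmul a x - rmul b x.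
Proof.
move=> x0; have := bq_rmul_linl (-1) b a x0.
by rewrite !scaleN1r [- b + a]addrC => ->; rewrite addrC.
Qed.

Lemma bq_lmulE x c : A0 x -> lmul x c = star (rmul (star c) (star x)).
Proof. by move=> x0; rewrite bq_star_rmul ?bq_starK //; exact: bqA0_star. Qed.

Lemma bq_star_cvg {T} {F : set_system T} {FF : Filter F} (f : T -> X) a :
  f @ F --> a -> star (f t) @[t --> F] --> star a.
Proof.
move=> f_a; apply/(@subr_cvg0 R[i] X).
apply: (@norm_le_cvg0 _ _ _ _ _ _ (fun t => `|f t - a|)).
  by move=> t; rewrite -bq_starB bq_norm_star.
by rewrite -(normr0 X); apply: cvg_norm; apply/(@subr_cvg0 R[i] X).
Qed.

Lemma bq_rmul_cvg {T} {F : set_system T} {FF : Filter F} (f : T -> X) a x :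
  A0 x -> f @ F --> a -> rmul (f t) x @[t --> F] --> rmul a x.
Proof. by move=> x0 f_a; exact: (cvg_comp _ _ f_a (@bq_rmul_cont R X x x0 a)). Qed.

Lemma bq_lmul_cvg {T} {F : set_system T} {FF : Filter F} (f : T -> X) a x :
  A0 x -> f @ F --> a -> lmul x (f t) @[t --> F] --> lmul x a.
Proof.
move=> x0 f_a; under eq_fun do rewrite bq_lmulE //; rewrite bq_lmulE //.
by apply/bq_star_cvg/bq_rmul_cvg; [exact: bqA0_star | exact: bq_star_cvg].
Qed.

Section SesquilinearForm.
Variable phi : X -> X -> R[i].
Hypothesis phi_sesqui : sesquilinear X phi.

Lemma sesquilinearDl a a' b : phi (a + a') b = phi a b + phi a' b.
Proof. by have := phi_sesqui.1 1 a a' b; rewrite scale1r mul1r. Qed.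

Lemma sesquilinearBl a a' b : phi (a - a') b = phi a b - phi a' b.
Proof. by rewrite -scaleN1r addrC phi_sesqui.1 mulN1r addrC. Qed.

Lemma sesquilinearBr a b b' : phi a (b - b') = phi a b - phi a b'.
Proof. by rewrite -scaleN1r addrC phi_sesqui.2 conjCN1 mulN1r addrC. Qed.

Lemma bounded_sesquilinear_cvg {T} {F : set_system T} {FF : Filter F}
    (p q : T -> X) p0 q0 :
  (forall a b, `|phi a b| <= `|a| * `|b|) -> p @ F --> p0 -> q @ F --> q0 ->
  (fun t => phi (p t) (q t) : R[i]^o) @ F --> (phi p0 q0 : R[i]^o).
Proof.
move=> phi_bound p_p0 q_q0.
apply: (subr_cvg0 (fun t => phi (p t) (q t) : R[i]^o) (phi p0 q0)).1.
apply: (@norm_le_cvg0 _ _ _ _ _ _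
  (fun t => `|p t - p0| * `|q t| + `|p0| * `|q t - q0|)) => [t|].
  have -> : phi (p t) (q t) - phi p0 q0 = phi (p t - p0) (q t) + phi p0 (q t - q0).
    by rewrite sesquilinearBl sesquilinearBr addrA subrK.
  by apply: le_trans (ler_normD _ _) _; apply: lerD; apply: phi_bound.
have p0_cvg : (fun t => `|p t - p0|) @ F --> (0 : R[i]^o).
  by rewrite -(normr0 X); apply: cvg_norm; apply/(@subr_cvg0 R[i] X).
have q0_cvg : (fun t => `|q t - q0|) @ F --> (0 : R[i]^o).
  by rewrite -(normr0 X); apply: cvg_norm; apply/(@subr_cvg0 R[i] X).
have := cvgD (cvgM p0_cvg (cvg_norm q_q0)) (cvgM (cvg_cst `|p0|) q0_cvg).
by rewrite mul0r mulr0 addr0; apply.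
Qed.
End SesquilinearForm.

Lemma S_A0_lmul phi x c v : S_A0 X phi -> A0 x -> A0 v ->
  phi (lmul x c) v = phi c (rmul (star x) v).
Proof.
move=> [phi_sesqui _ phi_rmul phi_bound] x0 v0.
apply/eqP; rewrite -subr_eq0; apply/eqP; move: c.
apply: (@continuous_eq0_on_dense _ _ A0); first exact: bqA0_dense.
  move=> c; apply: cvgB.
    apply: (bounded_sesquilinear_cvg phi_sesqui phi_bound _ (cvg_cst v)).
    exact: bq_lmul_cvg.
  exact: (bounded_sesquilinear_cvg phi_sesqui phi_bound cvg_id (cvg_cst _)).
by move=> c c0; rewrite bq_lmul_rmul // phi_rmul // subrr.
Qed.

Lemma tauw_cvg_form u a phi x y : tauw_cvg X u a -> S_A0 X phi -> A0 x -> A0 y ->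
  (phi (rmul (u n) x) y : R[i]^o) @[n --> \oo] --> (phi (rmul a x) y : R[i]^o).
Proof.
move=> u_a phiS x0 y0; have phi_sesqui : sesquilinear X phi by case: phiS.
apply/cvgrPdist_lt => e e0; have [N uN] := u_a phi x y phiS x0 y0 e e0.
by exists N => // n /uN; rewrite distrC bq_rmulB // sesquilinearBl.
Qed.

Lemma tauw_cauchy_form_cvg u :
  (forall phi x y, S_A0 X phi -> A0 x -> A0 y ->
     cvgn (fun n => phi (rmul (u n) x) y : R[i]^o)) ->
  tauw_cauchy X u.
Proof.
move=> u_cvg phi x y phiS x0 y0 e e0.
have phi_sesqui : sesquilinear X phi by case: phiS.
have e20 : 0 < e / 2 by rewrite divr_gt0.
have [N _ uN] := cvgr_dist_lt _ _ (u_cvg phi x y phiS x0 y0) _ e20.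
exists N => m n Nm Nn; rewrite bq_rmulB // sesquilinearBl //.
set l := limn _ in uN.
apply: le_lt_trans (ler_distD l _ _) _.
by rewrite distrC [e]splitr; apply: ltrD; apply: uN.
Qed.

Lemma S_A0_rmul_star_cvg phi {T} {F : set_system T} {FF : Filter F}
    (p q : T -> X) p0 q0 u v :
  S_A0 X phi -> A0 u -> A0 v -> p @ F --> p0 -> q @ F --> q0 ->
  (fun t => phi (rmul (p t) u) (rmul (star (q t)) v) : R[i]^o) @ F -->
  (phi (rmul p0 u) (rmul (star q0) v) : R[i]^o).
Proof.
move=> [phi_sesqui _ _ phi_bound] u0 v0 p_p0 q_q0.
apply: (bounded_sesquilinear_cvg phi_sesqui phi_bound); first exact: bq_rmul_cvg.
exact/bq_rmul_cvg/bq_star_cvg.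
Qed.

Lemma qu_derivation_form_lmul delta phi x y u v :
  qu_derivation X delta -> S_A0 X phi -> A0 x -> A0 y -> A0 u -> A0 v ->
  phi (rmul (delta (lmul x y)) u) v =
  phi (rmul y u) (rmul (star (delta x)) v) +
  phi (rmul (delta y) u) (rmul (star x) v).
Proof.
move=> [_ _ delta_mul] phiS x0 y0 u0 v0; have [phi_sesqui _ phi_rmul _] := phiS.
rewrite delta_mul // bq_rmulD // sesquilinearDl //; congr (_ + _).
  have yu0 : A0 (lmul y u) by exact: bqA0_M.
  by rewrite bq_assoc_rr // phi_rmul // bq_lmul_rmul.
by rewrite bq_assoc_lr // S_A0_lmul.
Qed.
End BanachQuasiStarAlgebra.

Theorem proposition3p2 (R : realType) (X : BQalg R) :
  star_semisimple X -> tauw_seq_complete X ->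
  forall delta : X -> X, qu_derivation X delta -> closable X delta ->
  forall a b da db : X,
    closure_graph X delta a da -> closure_graph X delta b db ->
    weak_prod_defined X a b ->
    exists dw : X,
      forall (phi : X -> X -> R[i]) (u v : X), S_A0 X phi -> @bqA0 R X u -> @bqA0 R X v ->
        phi (bq_rmul dw u) v =
        phi (bq_rmul b u) (bq_rmul (bq_star da) v) +
        phi (bq_rmul db u) (bq_rmul (bq_star a) v).
Proof.
move=> _ tauw_complete delta delta_der _ a b da db [xs [xs0 [xs_a dxs_da]]]
  [ys [ys0 [ys_b dys_db]]] _.
pose z n := delta (bq_lmul (xs n) (ys n)).
have z_cvg phi u v : S_A0 X phi -> bqA0 u -> bqA0 v ->
    (phi (bq_rmul (z n) u) v : R[i]^o) @[n --> \oo] -->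
    (phi (bq_rmul b u) (bq_rmul (bq_star da) v) +
     phi (bq_rmul db u) (bq_rmul (bq_star a) v) : R[i]^o).
  move=> phiS u0 v0.
  under eq_fun => n do
    rewrite (qu_derivation_form_lmul delta_der phiS (xs0 n) (ys0 n) u0 v0).
  by apply: cvgD; apply: S_A0_rmul_star_cvg.
have [dw z_dw] : exists dw, tauw_cvg X z dw.
  apply/tauw_complete/tauw_cauchy_form_cvg => phi u v phiS u0 v0.
  exact: cvgP (z_cvg phi u v phiS u0 v0).
exists dw => phi u v phiS u0 v0.
exact: cvg_unique (tauw_cvg_form z_dw phiS u0 v0) (z_cvg phi u v phiS u0 v0).
Qed.
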